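(* Let $t$ and $s$ be terms in the language of strong quasi-MV* algebras. Then $\mathbb{FSQMV^\ast}\models t\approx s$ if and only if $\mathbf{F}(\mathbf{MV^*}_{[-1,1]},0)\models t\approx s$.
   Context: A quasi-MV* algebra is an algebra $\langle A;\oplus,-,{}^{+},{}^{-},0,1\rangle$ of type $\langle 2,1,1,1,0,0\rangle$ (${}^+,{}^-$ bind more tightly than $-$, which binds more tightly than $\oplus$; $-1$ denotes $-(1)$) such that for all $x,y,z$: (1) $x\oplus y=y\oplus x$; (2) $(1\oplus x)\oplus(y\oplus(1\oplus z))=((1\oplus x)\oplus y)\oplus(1\oplus z)$; (3) $(x\oplus 1)\oplus 1=1$; (4) $(x\oplus y)\oplus 0=x\oplus y$; (5) $x^{+}\oplus 0=(x\oplus 0)^{+}=1\oplus(-1\oplus x)$ and $x^{-}\oplus 0=(x\oplus 0)^{-}=-1\oplus(1\oplus x)$; (6) $x\oplus y=(x^{+}\oplus y^{+})\oplus(x^{-}\oplus y^{-})$; (7) $0=-0$; (8) $x\oplus(-x)=0$; (9) $-(x\oplus y)=(-x)\oplus(-y)$; (10) $-(-x)=x$; (11) $(-x\oplus(x\oplus y))^{+}=-x^{+}\oplus(x^{+}\oplus y^{+})$; (12) $x\vee y=y\vee x$; (13) $x\vee(y\vee z)=(x\vee y)\vee z$; (14) $x\oplus(y\vee z)=(x\oplus y)\vee(x\oplus z)$; where $x\vee y:=(x^{+}\oplus(-x^{+}\oplus y^{+})^{+})\oplus(x^{-}\oplus(-x^{-}\oplus y^{-})^{+})$. A strong quasi-MV*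 algebra is a quasi-MV* algebra satisfying $x^+=x^+\oplus 0$ and $x^-=x^-\oplus 0$; it is flat if $0=1$. $\mathbb{FSQMV^\ast}$ is the variety of flat strong quasi-MV* algebras. $\mathbf{F}(\mathbf{MV^*}_{[-1,1]},0)$ is the algebra with universe $[-1,1]$, $a\oplus b=0$, $-a$ the usual negation of reals, $a^+=0$, $a^-=0$ for all $a,b$, and constants $0=1=0$ (the real number $0$). Terms are built from variables and $0,1$ using $\oplus,-,{}^+,{}^-$; $K\models t\approx s$ means $t,s$ agree under all assignments in all algebras of $K$. *)

From Stdlib Require Import Reals Lra.
Open Scope R_scope.

Record qmv_struct := QMVStruct {
  car :> Type;
  qoplus : car -> car -> car;
  qneg : car -> car;
  qplus : car -> car;
  qminus : car -> car;
  qzero : car;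
  qone : car
}.

Arguments qoplus {_}. Arguments qneg {_}. Arguments qplus {_}.
Arguments qminus {_}. Arguments qzero {_}. Arguments qone {_}.

Definition qjoin (A : qmv_struct) (x y : A) : A :=
  qoplus (qoplus (qplus x) (qplus (qoplus (qneg (qplus x)) (qplus y))))
         (qoplus (qminus x) (qplus (qoplus (qneg (qminus x)) (qminus y)))).

Definition is_quasi_mvstar (A : qmv_struct) : Prop :=
  let o := @qoplus A in let n := @qneg A in
  let p := @qplus A in let m := @qminus A in
  let z := @qzero A in let u := @qone A in
  (forall x y, o x y = o y x) /\
  (forall x y w, o (o u x) (o y (o u w)) = o (o (o u x) y) (o u w)) /\
  (forall x, o (o x u) u = u) /\
  (forall x y, o (o x y) z = o x y) /\
  (forall x, o (p x) z = p (o x z) /\ p (o x z) = o u (o (n u) x)) /\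
  (forall x, o (m x) z = m (o x z) /\ m (o x z) = o (n u) (o u x)) /\
  (forall x y, o x y = o (o (p x) (p y)) (o (m x) (m y))) /\
  (z = n z) /\
  (forall x, o x (n x) = z) /\
  (forall x y, n (o x y) = o (n x) (n y)) /\
  (forall x, n (n x) = x) /\
  (forall x y, p (o (n x) (o x y)) = o (n (p x)) (o (p x) (p y))) /\
  (forall x y, qjoin A x y = qjoin A y x) /\
  (forall x y w, qjoin A x (qjoin A y w) = qjoin A (qjoin A x y) w) /\
  (forall x y w, o x (qjoin A y w) = qjoin A (o x y) (o x w)).

Definition is_strong_qmvstar (A : qmv_struct) : Prop :=
  is_quasi_mvstar A /\
  (forall x : A, qplus x = qoplus (qplus x) qzero) /\
  (forall x : A, qminus x = qoplus (qminus x) qzero).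

Definition is_FSQMV (A : qmv_struct) : Prop :=
  is_strong_qmvstar A /\ (@qzero A = @qone A).

Inductive term : Type :=
| TVar : nat -> term
| TZero : term
| TOne : term
| TOplus : term -> term -> term
| TNeg : term -> term
| TPlus : term -> term
| TMinus : term -> term.

Fixpoint eval (A : qmv_struct) (v : nat -> A) (t : term) : A :=
  match t with
  | TVar i => v i
  | TZero => qzero
  | TOne => qone
  | TOplus a b => qoplus (eval A v a) (eval A v b)
  | TNeg a => qneg (eval A v a)
  | TPlus a => qplus (eval A v a)
  | TMinus a => qminus (eval A v a)
  end.

Definition satisfies (A : qmv_struct) (t s : term) : Prop :=
  forall v : nat -> A, eval A v t = eval A v s.

Definition I11 : Type := { x : R | -1 <= x <= 1 }.

Lemma I11_zero_prf : -1 <= 0 <= 1. Proof. lra. Qed.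
Definition I11_zero : I11 := exist _ 0 I11_zero_prf.

Lemma I11_neg_prf (a : I11) : -1 <= - proj1_sig a <= 1.
Proof. destruct a as [x Hx]; simpl; lra. Qed.
Definition I11_neg (a : I11) : I11 := exist _ (- proj1_sig a) (I11_neg_prf a).

Definition F_MV11 : qmv_struct :=
  {| car := I11;
     qoplus := fun _ _ => I11_zero;
     qneg := I11_neg;
     qplus := fun _ => I11_zero;
     qminus := fun _ => I11_zero;
     qzero := I11_zero;
     qone := I11_zero |}.

From Stdlib Require Import Reals Lra ProofIrrelevance.
Open Scope R_scope.

(* In a flat strong quasi-MV* algebra the axioms [(x (+) 1) (+) 1 = 1],
   [(x (+) y) (+) 0 = x (+) y] and [0 = 1] force [x (+) y = 0], and strongness
   then gives [x^+ = x^- = 0]; so every term collapses to [0] or to a variable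
   under an even or odd number of negations.  The algebra [F_MV11] is flat and
   strong, and the assignment [x_i := 1/(i+1)] separates these normal forms
   there, so an equation holding in [F_MV11] has equal normal forms on both
   sides and hence holds in every flat strong quasi-MV* algebra. *)

Lemma I11_eq (a b : I11) : proj1_sig a = proj1_sig b -> a = b.
Proof.
  destruct a as [x Hx], b as [y Hy]; simpl; intros ->.
  f_equal; apply proof_irrelevance.
Qed.

Lemma I11_neg_zero : I11_neg I11_zero = I11_zero.
Proof. apply I11_eq; simpl; lra. Qed.

Lemma F_MV11_is_FSQMV : is_FSQMV F_MV11.
Proof.
  split; [split |]; [| split; reflexivity | reflexivity].
  unfold is_quasi_mvstar, qjoin; simpl.
  repeat split; intros; try reflexivity;
    try solve [apply I11_neg_zero | symmetry; apply I11_neg_zero].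
  apply I11_eq; simpl; lra.
Qed.

Section FlatStrong.

Variable A : qmv_struct.
Hypothesis HA : is_FSQMV A.

Lemma FSQMV_one_zero : @qone A = qzero.
Proof. symmetry; apply HA. Qed.

Lemma FSQMV_neg_zero : qneg (@qzero A) = qzero.
Proof.
  destruct HA as [[HQ _] _]; unfold is_quasi_mvstar in HQ; cbv zeta in HQ.
  symmetry; apply HQ.
Qed.

Lemma FSQMV_oplus_zero (x y : A) : qoplus x y = qzero.
Proof.
  destruct HA as [[HQ _] _]; unfold is_quasi_mvstar in HQ; cbv zeta in HQ.
  destruct HQ as (_ & _ & Hunit & Hzero & _).
  assert (Hx0 : forall z : A, qoplus z qzero = qzero).
  { intro z. rewrite <- (Hzero z qzero), <- FSQMV_one_zero. apply Hunit. }
  rewrite <- Hzero. apply Hx0.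
Qed.

Lemma FSQMV_plus_zero (x : A) : qplus x = qzero.
Proof.
  destruct HA as [[_ [Hplus _]] _].
  rewrite Hplus; apply FSQMV_oplus_zero.
Qed.

Lemma FSQMV_minus_zero (x : A) : qminus x = qzero.
Proof.
  destruct HA as [[_ [_ Hminus]] _].
  rewrite Hminus; apply FSQMV_oplus_zero.
Qed.

End FlatStrong.

Inductive flat_nf : Type :=
| NFZero : flat_nf
| NFVar : nat -> bool -> flat_nf.

Definition flat_nf_neg (n : flat_nf) : flat_nf :=
  match n with
  | NFZero => NFZero
  | NFVar i b => NFVar i (negb b)
  end.

Fixpoint flat_nf_of (t : term) : flat_nf :=
  match t with
  | TVar i => NFVar i false
  | TNeg a => flat_nf_neg (flat_nf_of a)
  | _ => NFZero
  end.

Definition eval_nf (A : qmv_struct) (v : nat -> A) (n : flat_nf) : A :=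
  match n with
  | NFZero => qzero
  | NFVar i b => if b then qneg (v i) else v i
  end.

Lemma eval_flat_nf (A : qmv_struct) (v : nat -> A) (t : term) :
  is_FSQMV A -> eval A v t = eval_nf A v (flat_nf_of t).
Proof.
  intro HA.
  assert (Hnn : forall x : A, qneg (qneg x) = x).
  { destruct HA as [[HQ _] _]; unfold is_quasi_mvstar in HQ; cbv zeta in HQ.
    apply HQ. }
  induction t as [i | | | a _ b _ | a IHa | a _ | a _]; simpl.
  - reflexivity.
  - reflexivity.
  - apply FSQMV_one_zero, HA.
  - apply FSQMV_oplus_zero, HA.
  - rewrite IHa. destruct (flat_nf_of a) as [| i []]; simpl.
    + apply FSQMV_neg_zero, HA.
    + apply Hnn.
    + reflexivity.
  - apply FSQMV_plus_zero, HA.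
  - apply FSQMV_minus_zero, HA.
Qed.

Lemma generic_value_bounds (i : nat) : 0 < / (INR i + 1) <= 1.
Proof.
  pose proof (pos_INR i).
  split; [apply Rinv_0_lt_compat; lra |].
  rewrite <- Rinv_1; apply Rinv_le_contravar; lra.
Qed.

Lemma generic_value_inj (i j : nat) : / (INR i + 1) = / (INR j + 1) -> i = j.
Proof.
  intro H. apply INR_eq.
  apply Rinv_eq_reg in H. lra.
Qed.

Lemma generic_value_in_I11 (i : nat) : -1 <= / (INR i + 1) <= 1.
Proof. pose proof (generic_value_bounds i); lra. Qed.

Definition generic_valuation (i : nat) : F_MV11 :=
  exist _ (/ (INR i + 1)) (generic_value_in_I11 i).

Lemma eval_nf_generic_inj (n m : flat_nf) :
  eval_nf F_MV11 generic_valuation n = eval_nf F_MV11 generic_valuation m ->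
  n = m.
Proof.
  intro H; apply (f_equal (@proj1_sig _ _)) in H.
  destruct n as [| i b], m as [| j c]; [reflexivity | ..];
    try destruct b; try destruct c; simpl in H;
    try pose proof (generic_value_bounds i);
    try pose proof (generic_value_bounds j);
    try lra;
    f_equal; apply generic_value_inj; lra.
Qed.

Theorem proposition3p2 (t s : term) :
  (forall A : qmv_struct, is_FSQMV A -> satisfies A t s) <->
  satisfies F_MV11 t s.
Proof.
  split.
  - intro H. apply H, F_MV11_is_FSQMV.
  - intros H A HA v.
    assert (Hnf : flat_nf_of t = flat_nf_of s).
    { apply eval_nf_generic_inj.
      rewrite <- !eval_flat_nf by apply F_MV11_is_FSQMV.
      apply H. }
    rewrite !eval_flat_nf by exact HA.
    rewrite Hnf; reflexivity.
Qed.
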